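(* Consider the Beverton–Holt equation $u(t+1)=\dfrac{\mu K(t)u(t)}{K(t)+(\mu-1)u(t)}$, $t\in\mathbb Z_+$, where $\mu>1$, $\tau\in\mathbb N$, and $K:\mathbb Z_+\to\mathbb R$ is asymptotically $\tau$-periodic with $\alpha\le K(t)\le\beta$ for all $t$, for some constants $0<\alpha\le\beta$. Then for every initial value $u\ge0$ the solution $\varphi(t,u,K)$ with $\varphi(0,u,K)=u$ is asymptotically $\tau$-periodic.
   Context: A sequence $K$ is asymptotically $\tau$-periodic if $K=P+R$ with $P(t+\tau)=P(t)$ for all $t\in\mathbb Z_+$ and $R(t)\to0$ as $t\to\infty$. A solution is asymptotically $\tau$-periodic if it differs from a $\tau$-periodic sequence by a sequence tending to $0$. *)

From Stdlib Require Import Reals.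
Open Scope R_scope.

Definition asymp_periodic (tau : nat) (K : nat -> R) : Prop :=
  exists P Rm : nat -> R,
    (forall t, K t = P t + Rm t) /\
    (forall t, P (t + tau)%nat = P t) /\
    Un_cv Rm 0.

Fixpoint bh_sol (mu : R) (K : nat -> R) (u : R) (t : nat) : R :=
  match t with
  | O => u
  | S n => let x := bh_sol mu K u n in mu * K n * x / (K n + (mu - 1) * x)
  end.

(** The substitution v = 1/u linearises the Beverton–Holt map: v(t+1) = v(t)/mu + (1 - 1/mu)/K(t).
   Splitting K = P + R, the affine recursion driven by the periodic part P has a tau-periodic
   solution w, and since 1/mu < 1 the difference v - w is a contraction perturbed by
   (1 - 1/mu)(1/K - 1/P), which tends to 0 because K and P stay above alpha; hence v - w -> 0.
   Both v and w are bounded away from 0, so u = 1/v is within o(1) of the periodic 1/w. *)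

From Stdlib Require Import Reals Lra Lia.
Open Scope R_scope.

Lemma Un_cv_const (c : R) : Un_cv (fun _ => c) c.
Proof.
intros eps Heps; exists O; intros n _.
unfold Rdist; rewrite Rminus_diag, Rabs_R0; exact Heps.
Qed.

Lemma Un_cv0_scal (c : R) (x : nat -> R) :
  Un_cv x 0 -> Un_cv (fun t => c * x t) 0.
Proof.
intro Hx; rewrite <- (Rmult_0_r c).
exact (CV_mult _ _ _ _ (Un_cv_const c) Hx).
Qed.

Lemma Un_cv0_dominated (r e : nat -> R) (C : R) (N0 : nat) :
  Un_cv r 0 -> 0 < C ->
  (forall t, (N0 <= t)%nat -> Rabs (e t) <= C * Rabs (r t)) -> Un_cv e 0.
Proof.
intros Hr HC Hdom eps Heps.
destruct (Hr (eps / C)) as [N HN]; [apply Rdiv_lt_0_compat; lra|].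
exists (N + N0)%nat; intros n Hn.
specialize (HN n ltac:(lia)); unfold Rdist in *; rewrite Rminus_0_r in *.
apply Rle_lt_trans with (C * Rabs (r n)); [apply Hdom; lia|].
replace eps with (C * (eps / C)) by (field; lra).
apply Rmult_lt_compat_l; assumption.
Qed.

Lemma Rabs_inv_sub_le (m x y : R) : 0 < m -> m <= x -> m <= y ->
  Rabs (/ x - / y) <= / (m * m) * Rabs (x - y).
Proof.
intros Hm Hx Hy.
replace (/ x - / y) with (- (x - y) * / (x * y)) by (field; lra).
rewrite Rabs_mult, Rabs_Ropp, Rabs_inv, (Rabs_pos_eq (x * y)) by nra.
rewrite Rmult_comm; apply Rmult_le_compat_r; [apply Rabs_pos|].
apply Rinv_le_contravar; nra.
Qed.

Lemma Un_cv0_inv_sub (x y : nat -> R) (m : R) (N0 : nat) : 0 < m ->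
  (forall t, (N0 <= t)%nat -> m <= x t /\ m <= y t) ->
  Un_cv (fun t => x t - y t) 0 -> Un_cv (fun t => / x t - / y t) 0.
Proof.
intros Hm Hxy Hcv.
apply (Un_cv0_dominated _ _ (/ (m * m)) N0 Hcv); [apply Rinv_0_lt_compat; nra|].
intros t Ht; destruct (Hxy t Ht); apply Rabs_inv_sub_le; assumption.
Qed.

Lemma contraction_bound (a b : R) (d e : nat -> R) (N : nat) : 0 <= a < 1 ->
  (forall t, d (S t) = a * d t + e t) ->
  (forall t, (N <= t)%nat -> Rabs (e t) <= b * (1 - a)) ->
  forall k, Rabs (d (N + k)%nat) <= a ^ k * Rabs (d N) + b.
Proof.
intros Ha Hd He k.
assert (Hb : 0 <= b).
{ specialize (He N (le_n N)); pose proof (Rabs_pos (e N)); nra. }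
induction k as [|k IHk].
- rewrite Nat.add_0_r; simpl; lra.
- rewrite Nat.add_succ_r, Hd.
  specialize (He (N + k)%nat ltac:(lia)).
  apply Rle_trans with (a * Rabs (d (N + k)%nat) + Rabs (e (N + k)%nat)).
  { eapply Rle_trans; [apply Rabs_triang|].
    rewrite Rabs_mult, (Rabs_pos_eq a) by lra; lra. }
  assert (a * Rabs (d (N + k)%nat) <= a * (a ^ k * Rabs (d N) + b))
    by (apply Rmult_le_compat_l; lra).
  simpl pow; nra.
Qed.

Lemma contraction_Un_cv0 (a : R) (d e : nat -> R) : 0 <= a < 1 ->
  (forall t, d (S t) = a * d t + e t) -> Un_cv e 0 -> Un_cv d 0.
Proof.
intros Ha Hd He eps Heps.
destruct (He (eps / 2 * (1 - a))) as [N HN]; [apply Rmult_lt_0_compat; lra|].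
assert (Hbound := contraction_bound a (eps / 2) d e N Ha Hd).
lapply Hbound; clear Hbound.
2:{ intros t Ht; specialize (HN t Ht); unfold Rdist in HN.
    rewrite Rminus_0_r in HN; lra. }
intro Hbound.
set (D := Rabs (d N) + 1).
assert (HD : 0 < D) by (unfold D; pose proof (Rabs_pos (d N)); lra).
destruct (pow_lt_1_zero a ltac:(rewrite Rabs_pos_eq; lra) (eps / 2 / D))
  as [M HM]; [apply Rdiv_lt_0_compat; lra|].
exists (N + M)%nat; intros n Hn.
replace n with (N + (n - N))%nat by lia.
unfold Rdist; rewrite Rminus_0_r.
eapply Rle_lt_trans; [apply Hbound|].
specialize (HM (n - N)%nat ltac:(lia)).
assert (Hpow : 0 <= a ^ (n - N)) by (apply pow_le; lra).
rewrite Rabs_pos_eq in HM by exact Hpow.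
assert (a ^ (n - N) * D < eps / 2).
{ replace (eps / 2) with (eps / 2 / D * D) by (field; lra).
  apply Rmult_lt_compat_r; assumption. }
unfold D in *; nra.
Qed.

Fixpoint affine_orbit (a : R) (c : nat -> R) (x : R) (n : nat) : R :=
  match n with
  | O => x
  | S n => a * affine_orbit a c x n + c n
  end.

Lemma affine_orbit_decomp (a : R) (c : nat -> R) (x : R) (n : nat) :
  affine_orbit a c x n = a ^ n * x + affine_orbit a c 0 n.
Proof. induction n as [|n IHn]; simpl; [ring | rewrite IHn; ring]. Qed.

Lemma affine_orbit_nonneg (a : R) (c : nat -> R) (x : R) :
  0 <= a -> (forall n, 0 <= c n) -> 0 <= x -> forall n, 0 <= affine_orbit a c x n.
Proof.
intros Ha Hc Hx n; induction n as [|n IHn]; simpl; [exact Hx|].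
specialize (Hc n); nra.
Qed.

Lemma affine_orbit_S_ge (a : R) (c : nat -> R) (x m : R) :
  0 <= a -> 0 <= m -> (forall n, m <= c n) -> 0 <= x ->
  forall n, m <= affine_orbit a c x (S n).
Proof.
intros Ha Hm Hc Hx n; simpl.
assert (0 <= affine_orbit a c x n).
{ apply affine_orbit_nonneg; try assumption; intro k; specialize (Hc k); lra. }
specialize (Hc n); nra.
Qed.

Lemma affine_orbit_sub_Un_cv0 (a : R) (c1 c2 : nat -> R) (x1 x2 : R) : 0 <= a < 1 ->
  Un_cv (fun t => c1 t - c2 t) 0 ->
  Un_cv (fun t => affine_orbit a c1 x1 t - affine_orbit a c2 x2 t) 0.
Proof.
intros Ha Hc; apply (contraction_Un_cv0 a _ (fun t => c1 t - c2 t) Ha); [|exact Hc].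
intro t; simpl; ring.
Qed.

Section PeriodicOrbit.

Variables (a : R) (c : nat -> R) (tau : nat).
Hypothesis c_periodic : forall t, c (t + tau)%nat = c t.

Lemma affine_orbit_periodic (x : R) : affine_orbit a c x tau = x ->
  forall t, affine_orbit a c x (t + tau) = affine_orbit a c x t.
Proof.
intros Hx t; induction t as [|t IHt]; [exact Hx|].
simpl; rewrite IHt, c_periodic; reflexivity.
Qed.

(** The periodic orbit starts at the fixed point of the affine return map
   x |-> a^tau x + affine_orbit a c 0 tau. *)
Lemma exists_periodic_affine_orbit (m : R) : 0 <= a < 1 -> (0 < tau)%nat ->
  0 <= m -> (forall t, m <= c t) ->
  exists x, (forall t, m <= affine_orbit a c x t) /\
            forall t, affine_orbit a c x (t + tau) = affine_orbit a c x t.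
Proof.
intros Ha Htau Hm Hc.
assert (Hq : 0 <= a ^ tau < 1) by (apply pow_lt_1_compat; assumption).
assert (Hg : 0 <= affine_orbit a c 0 tau).
{ apply affine_orbit_nonneg; [lra | intro t; specialize (Hc t); lra | lra]. }
set (x := affine_orbit a c 0 tau / (1 - a ^ tau)).
assert (Hx : 0 <= x) by (apply Rmult_le_pos; [lra | apply Rlt_le, Rinv_0_lt_compat; lra]).
assert (Hper : forall t, affine_orbit a c x (t + tau) = affine_orbit a c x t).
{ apply affine_orbit_periodic; unfold x; rewrite affine_orbit_decomp; field; lra. }
exists x; split; [|exact Hper].
intro t; rewrite <- Hper; replace (t + tau)%nat with (S (t + tau - 1)) by lia.
apply affine_orbit_S_ge; lra || assumption.
Qed.

End PeriodicOrbit.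

Lemma periodic_add_mul (P : nat -> R) (tau : nat) :
  (forall t, P (t + tau)%nat = P t) -> forall n t, P (t + n * tau)%nat = P t.
Proof.
intros HP n; induction n as [|n IHn]; intro t.
- rewrite Nat.mul_0_l, Nat.add_0_r; reflexivity.
- replace (t + S n * tau)%nat with (t + n * tau + tau)%nat by lia.
  rewrite HP; apply IHn.
Qed.

Lemma periodic_part_bounds (P r : nat -> R) (tau : nat) (lo hi : R) : (0 < tau)%nat ->
  (forall t, P (t + tau)%nat = P t) -> Un_cv r 0 ->
  (forall t, lo <= P t + r t <= hi) -> forall t, lo <= P t <= hi.
Proof.
intros Htau HP Hr Hb t.
(* Every value of P is taken again at times where r is arbitrarily small. *)
assert (Hsmall : forall eps, 0 < eps -> exists s, P s = P t /\ Rabs (r s) < eps).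
{ intros eps Heps; destruct (Hr eps Heps) as [N HN].
  exists (t + N * tau)%nat; split; [apply periodic_add_mul, HP|].
  specialize (HN (t + N * tau)%nat ltac:(nia)).
  unfold Rdist in HN; rewrite Rminus_0_r in HN; exact HN. }
split.
- destruct (Rle_or_lt lo (P t)) as [Hle|Hlt]; [exact Hle|].
  destruct (Hsmall (lo - P t)) as [s [Hs Hrs]]; [lra|].
  apply Rabs_def2 in Hrs; specialize (Hb s); lra.
- destruct (Rle_or_lt (P t) hi) as [Hle|Hlt]; [exact Hle|].
  destruct (Hsmall (P t - hi)) as [s [Hs Hrs]]; [lra|].
  apply Rabs_def2 in Hrs; specialize (Hb s); lra.
Qed.

Lemma asymp_periodic_inv (tau : nat) (x v w : nat -> R) (m : R) (N0 : nat) :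
  0 < m -> (forall t, w (t + tau)%nat = w t) -> (forall t, m <= w t) ->
  (forall t, (N0 <= t)%nat -> m <= v t) -> (forall t, x t = / v t) ->
  Un_cv (fun t => v t - w t) 0 -> asymp_periodic tau x.
Proof.
intros Hm Hw Hwm Hvm Hx Hcv.
exists (fun t => / w t), (fun t => / v t - / w t); split; [|split].
- intro t; rewrite Hx; ring.
- intro t; rewrite Hw; reflexivity.
- apply (Un_cv0_inv_sub v w m N0 Hm); [|exact Hcv].
  intros t Ht; split; [apply Hvm, Ht | apply Hwm].
Qed.

Lemma bh_sol_0 (mu : R) (K : nat -> R) (t : nat) : bh_sol mu K 0 t = 0.
Proof. induction t as [|t IHt]; simpl; [|rewrite IHt; unfold Rdiv]; ring. Qed.

Section PositiveSolution.

Variables (mu u : R) (K : nat -> R).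
Hypotheses (mu_gt1 : 1 < mu) (u_gt0 : 0 < u) (K_gt0 : forall t, 0 < K t).

Lemma bh_sol_gt0 (t : nat) : 0 < bh_sol mu K u t.
Proof.
induction t as [|t IHt]; simpl; [exact u_gt0|].
specialize (K_gt0 t).
assert (0 < (mu - 1) * bh_sol mu K u t) by (apply Rmult_lt_0_compat; lra).
apply Rdiv_lt_0_compat; [apply Rmult_lt_0_compat; [apply Rmult_lt_0_compat|]|]; lra.
Qed.

Lemma inv_bh_sol (t : nat) :
  / bh_sol mu K u t = affine_orbit (/ mu) (fun s => (1 - / mu) * / K s) (/ u) t.
Proof.
induction t as [|t IHt]; [reflexivity|].
simpl; rewrite <- IHt.
pose proof (bh_sol_gt0 t); specialize (K_gt0 t).
assert (0 < (mu - 1) * bh_sol mu K u t) by (apply Rmult_lt_0_compat; lra).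
field; repeat split; lra.
Qed.

End PositiveSolution.

Theorem mainTheorem20 (mu : R) (tau : nat) (K : nat -> R) (alpha beta : R)
  (hmu : 1 < mu) (htau : (0 < tau)%nat)
  (hK : asymp_periodic tau K)
  (halpha : 0 < alpha) (hab : alpha <= beta)
  (hbounds : forall t, alpha <= K t <= beta)
  (u : R) (hu : 0 <= u) :
  asymp_periodic tau (bh_sol mu K u).
Proof.
destruct hK as [P [Rm [HKP [HPper HRm]]]].
destruct (Req_dec u 0) as [->|Hu0].
{ exists (fun _ => 0), (fun _ => 0); split; [|split].
  - intro t; rewrite bh_sol_0; ring.
  - reflexivity.
  - apply Un_cv_const. }
set (a := / mu).
assert (Ha : 0 < a < 1).
{ split; [apply Rinv_0_lt_compat; lra|].
  rewrite <- Rinv_1; apply Rinv_lt_contravar; lra. }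
assert (HPb : forall t, alpha <= P t <= beta).
{ apply (periodic_part_bounds P Rm tau); try assumption.
  intro t; rewrite <- HKP; apply hbounds. }
set (m := (1 - a) * / beta).
assert (Hm : 0 < m) by (apply Rmult_lt_0_compat; [|apply Rinv_0_lt_compat]; lra).
assert (Hcoef : forall X, alpha <= X <= beta -> m <= (1 - a) * / X).
{ intros X HX; apply Rmult_le_compat_l; [|apply Rinv_le_contravar]; lra. }
set (cK := fun t => (1 - a) * / K t).
set (cP := fun t => (1 - a) * / P t).
destruct (exists_periodic_affine_orbit a cP tau
            ltac:(intro t; unfold cP; rewrite HPper; reflexivity) m ltac:(lra) htau
            ltac:(lra) ltac:(intro t; apply Hcoef, HPb)) as [w0 [Hwm Hwper]].
assert (Hv : forall t, / bh_sol mu K u t = affine_orbit a cK (/ u) t).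
{ intro t; apply inv_bh_sol; [exact hmu | lra | intro s; specialize (hbounds s); lra]. }
assert (HcKP : Un_cv (fun t => cK t - cP t) 0).
{ apply (Un_cv_ext (fun t => (1 - a) * (/ K t - / P t))); [intro; unfold cK, cP; ring|].
  apply Un_cv0_scal, (Un_cv0_inv_sub K P alpha O halpha).
  - intros t _; split; [apply hbounds | apply HPb].
  - apply (Un_cv_ext Rm); [intro t; rewrite HKP; ring | exact HRm]. }
apply (asymp_periodic_inv tau _ (fun t => / bh_sol mu K u t) _ m 1 Hm Hwper Hwm).
- intros t Ht; replace t with (S (t - 1)) by lia; rewrite Hv.
  apply affine_orbit_S_ge; [lra | lra | intro s; apply Hcoef, hbounds |].
  apply Rlt_le, Rinv_0_lt_compat; lra.
- intro t; rewrite Rinv_inv; reflexivity.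
- apply (Un_cv_ext (fun t => affine_orbit a cK (/ u) t - affine_orbit a cP w0 t)).
  + intro t; rewrite Hv; reflexivity.
  + apply affine_orbit_sub_Un_cv0; [lra | exact HcKP].
Qed.
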